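(* In the supersample setting described in the context, assume the loss takes values in $\{0,1\}$ and let $\gamma\in(0,1)$. For any $C_1>0$, \[ \mathrm{Err}-C_1V(\gamma)\leq\frac{2+C_1\gamma^2}{n}\sum_{i=1}^n\mathbb E_{L^+_{i},\tilde{\varepsilon}_i}\left[\tilde{\varepsilon}_iL^+_{i}\right], \] where $\tilde{\varepsilon}_i=(-1)^{1-U_i}-\frac{C_1\gamma^2}{C_1\gamma^2+2}$ (a shifted Rademacher variable with mean $-\frac{C_1\gamma^2}{C_1\gamma^2+2}$).
   Context: Let $\mathcal Z=\mathcal X\times\mathcal Y$ and let $\mu$ be a distribution on $\mathcal Z$. A (possibly randomized) learning algorithm $\mathcal A$ maps a training sample in $\mathcal Z^n$ to a hypothesis $W\in\mathcal W$, and $\ell:\mathcal W\times\mathcal Z\to\{0,1\}$ is a loss. For $S=(Z_1,\dots,Z_n)\sim\mu^{n}$ and $W\sim P_{W|S}$, let $L_\mu=\mathbb E_W\mathbb E_{Z'\sim\mu}[\ell(W,Z')]$ (with $Z'$ independent of $(S,W)$), $L_S(w)=\frac1n\sum_i\ell(w,Z_i)$, $L_n=\mathbb E_{W,S}[L_S(W)]$ and $\mathrm{Err}=L_\mu-L_n$. The $\gamma$-variance is $V(\gamma)=\mathbb E_{W,S}\big[\frac1n\sum_{i=1}^n(\ell(W,Z_i)-(1+\gamma)L_S(W))^2\big]$. Supersample: $\widetilde Z=(\widetilde Z_{i,j})_{i\in\{1,\dots,n\},j\in\{0,1\}}$ with i.i.d. entries of law $\mu$; $U=(U_1,\dots,U_n)$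 uniform on $\{0,1\}^n$, independent of $\widetilde Z$; $W=\mathcal A(\widetilde Z_U)$ with $\widetilde Z_U=(\widetilde Z_{1,U_1},\dots,\widetilde Z_{n,U_n})$; $L_i^+=\ell(W,\widetilde Z_{i,0})$. *)

From HB Require Import structures.
From mathcomp Require Import all_boot all_order all_algebra.
From mathcomp Require Import all_classical all_reals all_analysis.
Set Implicit Arguments. Unset Strict Implicit. Unset Printing Implicit Defensive.
Import Order.TTheory GRing.Theory Num.Theory.
Local Open Scope classical_set_scope.
Local Open Scope ring_scope.

Definition preimg_sigma {dO dT : measure_display} {Omega : measurableType dO}
  {T : measurableType dT} (X : Omega -> T) : set (set Omega) :=
  [set E | exists2 B : set T, measurable B & E = X @^-1` B].

Definition mutually_independent {dO : measure_display} {Omega : measurableType dO}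
  {R : realType} (P : probability Omega R) (I : finType)
  (G : I -> set (set Omega)) : Prop :=
  forall (J : {set I}) (E : I -> set Omega),
    (forall k, k \in J -> G k (E k)) ->
    P (\bigcap_(k in [set k | k \in J]) E k) = (\prod_(k in J) P (E k))%E.

(** index type of the supersample random elements:
    inl (inl (i, j)) : Ztilde_{i,j};  inl (inr i) : U_i;
    inr true : internal randomness xi of the algorithm;
    inr false : fresh test point Z'. *)
Definition ss_index (n : nat) : finType := ((('I_n * bool) + 'I_n) + bool)%type.

Section Supersample.
Context {R : realType} {dO dZ dW dX : measure_display}
  {Omega : measurableType dO} {Z : measurableType dZ}
  {W : measurableType dW} {Xi : measurableType dX}.
Variable (P : probability Omega R) (n : nat).
Variable (A : n.-tuple Z -> Xi -> W) (loss : W -> Z -> R).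
Variable (Zt : 'I_n -> bool -> Omega -> Z) (U : 'I_n -> Omega -> bool)
  (xi : Omega -> Xi) (Zp : Omega -> Z).

Definition ss_sigma (k : ss_index n) : set (set Omega) :=
  match k with
  | inl (inl (i, j)) => preimg_sigma (Zt i j)
  | inl (inr i) => preimg_sigma (U i)
  | inr true => preimg_sigma xi
  | inr false => preimg_sigma Zp
  end.

(** expectation (all integrands below are bounded) *)
Definition Ex (f : Omega -> R) : R := Rintegral P setT f.

(** training sample S = Ztilde_U  (U_i = true means U_i = 1) *)
Definition train (w : Omega) : n.-tuple Z := [tuple Zt i (U i w) w | i < n].
Definition hyp (w : Omega) : W := A (train w) (xi w).
Definition emp_risk (h : W) (s : n.-tuple Z) : R :=
  n%:R^-1 * \sum_(i < n) loss h (tnth s i).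
Definition L_mu : R := Ex (fun w => loss (hyp w) (Zp w)).
Definition L_n : R := Ex (fun w => emp_risk (hyp w) (train w)).
Definition Err : R := L_mu - L_n.
Definition Vgamma (gamma : R) : R :=
  Ex (fun w => n%:R^-1 * \sum_(i < n)
        (loss (hyp w) (tnth (train w) i)
         - (1 + gamma) * emp_risk (hyp w) (train w)) ^+ 2).
Definition Lplus (i : 'I_n) (w : Omega) : R := loss (hyp w) (Zt i false w).
Definition eps_shift (C1 gamma : R) (i : 'I_n) (w : Omega) : R :=
  (if U i w then 1 else -1) - C1 * gamma ^+ 2 / (C1 * gamma ^+ 2 + 2).
End Supersample.

From HB Require Import structures.
From mathcomp Require Import all_boot all_order all_algebra perm.
From mathcomp Require Import all_classical all_reals all_analysis.
From mathcomp Require Import measurable_realfun.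
From mathcomp Require Import ring.
Import Order.TTheory GRing.Theory Num.Theory.
Local Open Scope classical_set_scope.
Local Open Scope ring_scope.

(* The proof rests on two measure-preserving symmetries of the supersample.
   Exchanging Ztilde_{i,0} with Ztilde_{i,1} while flipping U_i leaves the
   training sample, hence W, unchanged; on the event {U_i = 1}, so does
   exchanging Ztilde_{i,0} with the test point Z'.  Let a_i and b_i be the
   expectations of L_i^+ on {U_i = 1} and on {U_i = 0} ([Lplus_on i true] and
   [Lplus_on i false]).  The first symmetry gives L_n = (2/n) sum_i b_i, both
   together give L_mu = 2 a_i, and E[eps_i L_i^+] = (1 - c) a_i - (1 + c) b_i
   with c = C1 gamma^2 / (C1 gamma^2 + 2).  As the loss is {0,1}-valued, the
   gamma-variance is pointwise L_S + (gamma^2 - 1) L_S^2 >= gamma^2 L_S, and the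
   bound becomes linear algebra in the a_i and b_i.
   That the symmetries preserve the joint law is checked on measurable boxes of
   the product space of all coordinates: by independence the probability of a
   box factorises, and a symmetry only permutes the i.i.d. Z-coordinates and
   flips fair coins. *)


Section bounded_expectation.
Context {d} {Omega : measurableType d} {R : realType} (P : probability Omega R).

Definition bounded_measurable (f : Omega -> R) :=
  measurable_fun setT f /\ exists M : R, forall w, `|f w| <= M.

Lemma bounded_measurable_integrable f :
  bounded_measurable f -> P.-integrable setT (EFin \o f).
Proof.
move=> [mf [M hM]]; apply: measurable_bounded_integrable => //.
  by move: (probability_setT P) => /= ->; exact: ltry.
exists M; split; first by rewrite num_real.
by move=> x Mx y _; exact: le_trans (hM y) (ltW Mx).
Qed.

Lemma bounded_measurable_cst c : bounded_measurable (fun=> c).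
Proof. by split; [exact: measurable_cst | exists `|c|]. Qed.

Lemma bounded_measurableD f g : bounded_measurable f -> bounded_measurable g ->
  bounded_measurable (fun w => f w + g w).
Proof.
move=> [mf [M hM]] [mg [N hN]]; split; first exact: measurable_funD.
by exists (M + N) => w; apply: le_trans (ler_normD _ _) _; apply: lerD.
Qed.

Lemma bounded_measurableB f g : bounded_measurable f -> bounded_measurable g ->
  bounded_measurable (fun w => f w - g w).
Proof.
move=> [mf [M hM]] [mg [N hN]]; split; first exact: measurable_funB.
by exists (M + N) => w; apply: le_trans (ler_normB _ _) _; apply: lerD.
Qed.

Lemma bounded_measurableM f g : bounded_measurable f -> bounded_measurable g ->
  bounded_measurable (fun w => f w * g w).
Proof.
move=> [mf [M hM]] [mg [N hN]]; split; first exact: measurable_funM.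
exists (M * N) => w; rewrite normrM.
by apply: ler_pM => //; apply: le_trans (hM w).
Qed.

Lemma bounded_measurable_sum I (s : seq I) (F : I -> Omega -> R) :
  (forall i, bounded_measurable (F i)) ->
  bounded_measurable (fun w => \sum_(i <- s) F i w).
Proof.
move=> bF; elim: s => [|i s ih].
  by under eq_fun do rewrite big_nil; exact: bounded_measurable_cst.
by under eq_fun do rewrite big_cons; exact: bounded_measurableD.
Qed.

Lemma eq_Ex f g : f =1 g -> Ex P f = Ex P g.
Proof. by move=> /funext ->. Qed.

Lemma ExD f g : bounded_measurable f -> bounded_measurable g ->
  Ex P (fun w => f w + g w) = Ex P f + Ex P g.
Proof. by move=> bf bg; rewrite /Ex RintegralD //; exact: bounded_measurable_integrable. Qed.

Lemma ExB f g : bounded_measurable f -> bounded_measurable g ->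
  Ex P (fun w => f w - g w) = Ex P f - Ex P g.
Proof. by move=> bf bg; rewrite /Ex RintegralB //; exact: bounded_measurable_integrable. Qed.

Lemma ExZ c f : bounded_measurable f -> Ex P (fun w => c * f w) = c * Ex P f.
Proof. by move=> bf; rewrite /Ex RintegralZl //; exact: bounded_measurable_integrable. Qed.

Lemma Ex_sum I (s : seq I) (F : I -> Omega -> R) :
  (forall i, bounded_measurable (F i)) ->
  Ex P (fun w => \sum_(i <- s) F i w) = \sum_(i <- s) Ex P (F i).
Proof.
move=> bF; elim: s => [|i s ih].
  by under eq_fun do rewrite big_nil; rewrite big_nil /Ex Rintegral_cst // mul0r.
under eq_fun do rewrite big_cons.
by rewrite ExD ?ih ?big_cons //; exact: bounded_measurable_sum.
Qed.

Lemma ler_Ex f g : bounded_measurable f -> bounded_measurable g ->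
  (forall w, f w <= g w) -> Ex P f <= Ex P g.
Proof.
by move=> bf bg fg; apply: le_Rintegral => //; exact: bounded_measurable_integrable.
Qed.

Lemma eq_law_generated d' (T : measurableType d') (X X' : Omega -> T)
    (G : set (set T)) :
  measurable_fun setT X -> measurable_fun setT X' ->
  measurable = <<s G >> -> setI_closed G -> G setT ->
  (forall B, G B -> P (X @^-1` B) = P (X' @^-1` B)) ->
  forall B, measurable B -> P (X @^-1` B) = P (X' @^-1` B).
Proof.
move=> mX mX' GE GI GT XX' B mB.
apply: (@measure_unique _ _ _ G (fun=> setT) GE GI (fun=> GT) _
  (pushforward P X) (pushforward P X')) => //.
- by rewrite bigcup_const.
- move=> _; change (P (X @^-1` setT) < +oo)%E.
  by rewrite preimage_setT probability_setT ltry.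
Qed.

Lemma Ex_eq_law d' (T : measurableType d') (X X' : Omega -> T) (f : T -> R) :
  measurable_fun setT X -> measurable_fun setT X' ->
  (forall B, measurable B -> P (X @^-1` B) = P (X' @^-1` B)) ->
  measurable_fun setT f -> (forall y, 0 <= f y) ->
  Ex P (f \o X) = Ex P (f \o X').
Proof.
move=> mX mX' XX' mf f0; rewrite /Ex /Rintegral; congr fine.
have mEf : measurable_fun setT (EFin \o f) by exact/measurable_EFinP.
have Ef0 : {in setT, forall y, (0 <= (EFin \o f) y)%E} by move=> y _; rewrite lee_fin.
have pushX := ge0_integral_pushforward mX P measurableT mEf Ef0.
have pushX' := ge0_integral_pushforward mX' P measurableT mEf Ef0.
rewrite !preimage_setT in pushX pushX'.
rewrite -[LHS]/(\int[P]_(x in setT) ((EFin \o f) \o X) x)%E -pushX.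
rewrite -[RHS]/(\int[P]_(x in setT) ((EFin \o f) \o X') x)%E -pushX'.
by apply: eq_measure_integral => B mB _; exact: XX'.
Qed.

Lemma prob_preimage_addb (U : Omega -> bool) (f : bool) (S : set bool) :
  P (U @^-1` [set true]) = P (U @^-1` [set false]) ->
  P (U @^-1` (addb f @^-1` S)) = P (U @^-1` S).
Proof.
move=> fair; case: f => //=.
have [eqS|neqS] := pselect (S true <-> S false).
  by congr (P _); apply/seteqP; split => w /=; case: (U w) => /=; case: eqS.
have preimage1 b : S b -> U @^-1` S = U @^-1` [set b].
  move=> Sb; apply/seteqP; split => w /=; last by move->.
  by case: (U w) b Sb => -[] // Sb Sw; exfalso; apply: neqS; split.
have [St|nSt] := pselect (S true).
  rewrite (preimage1 true) //= (_ : _ @^-1` _ = U @^-1` [set false]) //.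
  apply/seteqP; split => w /=; last by move->.
  by case: (U w) => //= nSt; exfalso; apply: neqS; split.
have Sf : S false by apply: contrapT => nSf; apply: neqS; split.
rewrite (preimage1 false) // (_ : _ @^-1` _ = U @^-1` [set true]) //.
apply/seteqP; split => w /=; last by move->.
by case: (U w).
Qed.

End bounded_expectation.

Lemma gamma_variance01_ge (R : realFieldType) n (l : 'I_n -> R) (g : R) :
  (0 < n)%N -> (forall i, l i = 0 \/ l i = 1) -> g ^+ 2 <= 1 ->
  g ^+ 2 * (n%:R^-1 * \sum_(i < n) l i)
  <= n%:R^-1 * \sum_(i < n) (l i - (1 + g) * (n%:R^-1 * \sum_(i < n) l i)) ^+ 2.
Proof.
move=> n_gt0 l01 g1; set m := n%:R^-1 * _.
have n_neq0 : n%:R != 0 :> R by rewrite pnatr_eq0 -lt0n.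
have sum_l : \sum_(i < n) l i = n%:R * m by rewrite /m mulrA mulfV // mul1r.
have m_ge0 : 0 <= m.
  by rewrite mulr_ge0 ?invr_ge0 // sumr_ge0 // => i _; case: (l01 i) => ->.
have m_le1 : m <= 1.
  rewrite ler_pdivrMl ?ltr0n // mulr1 -[n in n%:R]card_ord -sumr_const.
  by apply: ler_sum => i _; case: (l01 i) => ->.
have -> : \sum_(i < n) (l i - (1 + g) * m) ^+ 2
          = \sum_(i < n) l i - 2 * (1 + g) * m * \sum_(i < n) l i
            + n%:R * ((1 + g) * m) ^+ 2.
  rewrite (eq_bigr (fun i => l i - 2 * (1 + g) * m * l i + ((1 + g) * m) ^+ 2)).
    by rewrite big_split sumrB -mulr_sumr sumr_const card_ord /=; ring.
  by move=> i _; case: (l01 i) => ->; ring.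
rewrite sum_l -subr_ge0.
have -> : n%:R^-1 * (n%:R * m - 2 * (1 + g) * m * (n%:R * m) + n%:R * ((1 + g) * m) ^+ 2)
          - g ^+ 2 * m = (1 - g ^+ 2) * (m * (1 - m)) by field.
by rewrite mulr_ge0 ?subr_ge0 // mulr_ge0 ?subr_ge0.
Qed.

Lemma shifted_rademacher_bound (R : realFieldType) n (a b : 'I_n -> R)
    (Lm Ln V g C : R) :
  (0 < n)%N -> 0 <= C -> (forall i, Lm = 2 * a i) ->
  Ln = n%:R^-1 * (2 * \sum_(i < n) b i) -> g ^+ 2 * Ln <= V ->
  Lm - Ln - C * V
  <= (2 + C * g ^+ 2) / n%:R * \sum_(i < n)
       ((1 - C * g ^+ 2 / (C * g ^+ 2 + 2)) * a i
        - (1 + C * g ^+ 2 / (C * g ^+ 2 + 2)) * b i).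
Proof.
move=> n_gt0 C_ge0 Lm_a Ln_b V_ge.
have n_neq0 : n%:R != 0 :> R by rewrite pnatr_eq0 -lt0n.
have K_neq0 : C * g ^+ 2 + 2 != 0.
  by rewrite gt_eqF // ltr_wpDl // mulr_ge0 // sqr_ge0.
have sum_a : \sum_(i < n) a i = n%:R * (Lm / 2).
  rewrite (eq_bigr (fun=> Lm / 2)) ?sumr_const ?card_ord ?mulr_natl //.
  by move=> i _; rewrite (Lm_a i); field.
rewrite sumrB -!mulr_sumr sum_a.
have -> : (2 + C * g ^+ 2) / n%:R * ((1 - C * g ^+ 2 / (C * g ^+ 2 + 2))
            * (n%:R * (Lm / 2)) - (1 + C * g ^+ 2 / (C * g ^+ 2 + 2))
            * \sum_(i < n) b i)
          = Lm - Ln - C * (g ^+ 2 * Ln).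
  by rewrite Ln_b; field; rewrite n_neq0 K_neq0.
by apply: lerB => //; exact: ler_wpM2l.
Qed.

Section supersample_space.
Context {R : realType} {dO dZ dX : measure_display}
  {Omega : measurableType dO} {Z : measurableType dZ} {Xi : measurableType dX}
  {P : probability Omega R} {n : nat} {mu : probability Z R}
  {Zt : 'I_n -> bool -> Omega -> Z} {U : 'I_n -> Omega -> bool}
  {xi : Omega -> Xi} {Zp : Omega -> Z}.
Hypothesis mZt : forall i j, measurable_fun setT (Zt i j).
Hypothesis mU : forall i, measurable_fun setT (U i).
Hypothesis mxi : measurable_fun setT xi.
Hypothesis mZp : measurable_fun setT Zp.
Hypothesis lawZt : forall i j B, measurable B -> P (Zt i j @^-1` B) = mu B.
Hypothesis lawZp : forall B, measurable B -> P (Zp @^-1` B) = mu B.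
Hypothesis fairU : forall i, P (U i @^-1` [set true]) = P (U i @^-1` [set false]).
Hypothesis indep : mutually_independent P (ss_sigma Zt U xi Zp).

(* The [Z]-valued coordinates: [inl (i, j)] is Ztilde_{i,j}, [inr tt] is Z'. *)
Definition zidx : finType := (('I_n * bool) + unit)%type.

Definition sample_type := ((zidx -> Z) * ('I_n -> bool) * Xi)%type.

Definition box (B : zidx -> set Z) (b : 'I_n -> set bool) (C : set Xi) :
    set sample_type :=
  [set y | (forall c, B c (y.1.1 c)) /\ (forall i, b i (y.1.2 i)) /\ C y.2].

Definition boxes : set (set sample_type) :=
  [set S | exists B b C,
    [/\ forall c, measurable (B c), measurable C & S = box B b C]].

Lemma boxes_setI : setI_closed boxes.
Proof.
move=> _ _ [B1 [b1 [C1 [mB1 mC1 ->]]]] [B2 [b2 [C2 [mB2 mC2 ->]]]].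
exists (fun c => B1 c `&` B2 c), (fun i => b1 i `&` b2 i), (C1 `&` C2).
split; [by move=> c; exact: measurableI | exact: measurableI |].
apply/seteqP; split => y /=.
  by move=> [[hB1 [hb1 hC1]] [hB2 [hb2 hC2]]].
move=> [hB [hb [hC1 hC2]]].
by split; (split; [move=> c; case: (hB c) | split => // i; case: (hb i)]).
Qed.

Lemma boxes_setT : boxes setT.
Proof.
exists (fun=> setT), (fun=> setT), setT; split => //.
by apply/seteqP; split.
Qed.

Definition sample_space := g_sigma_algebraType boxes.

Lemma measurable_box B b C : (forall c, measurable (B c)) -> measurable C ->
  measurable (box B b C : set sample_space).
Proof. by move=> mB mC; apply: sub_sigma_algebra; exists B, b, C. Qed.

Lemma measurable_zcoord c : measurable_fun setT (fun y : sample_space => y.1.1 c).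
Proof.
move=> _ S mS; rewrite setTI.
have -> : (fun y : sample_space => y.1.1 c) @^-1` S
          = box (fun c' => if c' == c then S else setT) (fun=> setT) setT.
  apply/seteqP; split => y /=; last by move=> [/(_ c)]; rewrite eqxx.
  by move=> Sy; split => // c'; case: eqP => // ->.
by apply: measurable_box => // c'; case: eqP.
Qed.

Lemma measurable_ucoord i : measurable_fun setT (fun y : sample_space => y.1.2 i).
Proof.
move=> _ S _; rewrite setTI.
have -> : (fun y : sample_space => y.1.2 i) @^-1` S
          = box (fun=> setT) (fun i' => if i' == i then S else setT) setT.
  apply/seteqP; split => y /=; last by move=> [_ [/(_ i)]]; rewrite eqxx.
  by move=> Sy; split => //; split => // i'; case: eqP => // ->.
exact: measurable_box.
Qed.

Lemma measurable_xicoord : measurable_fun setT (fun y : sample_space => y.2).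
Proof.
move=> _ S mS; rewrite setTI.
have -> : (fun y : sample_space => y.2) @^-1` S = box (fun=> setT) (fun=> setT) S.
  by apply/seteqP; split => y /=; [move=> Sy | move=> [_ []]].
exact: measurable_box.
Qed.

Definition zcoord (w : Omega) (c : zidx) : Z :=
  if c is inl (i, j) then Zt i j w else Zp w.

Definition sample (w : Omega) : sample_space := (zcoord w, U ^~ w, xi w).

Definition sample_event B b C (k : ss_index n) : set Omega :=
  match k with
  | inl (inl (i, j)) => Zt i j @^-1` B (inl (i, j))
  | inl (inr i) => U i @^-1` b i
  | inr true => xi @^-1` C
  | inr false => Zp @^-1` B (inr tt)
  end.

Lemma preimage_sample_box B b C :
  sample @^-1` box B b C
  = \bigcap_(k in [set k | k \in [set: ss_index n]%SET]) sample_event B b C k.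
Proof.
apply/seteqP; split => w /=.
  by move=> [hB [hb hC]] [[[i j]|i]|[]] _ /=; [exact: hB|exact: hb|exact: hC|exact: hB].
move=> /(_ _ (finset.in_setT _)) h; split; [|split].
- by move=> [[i j]|[]]; [exact: (h (inl (inl (i, j)))) | exact: (h (inr false))].
- by move=> i; exact: (h (inl (inr i))).
- exact: (h (inr true)).
Qed.

Lemma measurable_sample : measurable_fun setT sample.
Proof.
apply: (@measurability _ _ _ _ setT sample boxes) => //.
move=> _ [_ [B [b [C [mB mC ->]]]] <-].
rewrite setTI preimage_sample_box.
apply: fin_bigcap_measurable; first exact: finite_finset.
move=> [[[i j]|i]|[]] _ /=; rewrite -[X in measurable X]setTI.
- exact: mZt.
- exact: mU.
- exact: mxi.
- exact: mZp.
Qed.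

Definition box_prob B b C : \bar R :=
  (\prod_(c : zidx) mu (B c) * (\prod_(i < n) P (U i @^-1` b i) * P (xi @^-1` C)))%E.

Lemma prob_sample_box B b C : (forall c, measurable (B c)) -> measurable C ->
  P (sample @^-1` box B b C) = box_prob B b C.
Proof.
move=> mB mC; rewrite preimage_sample_box indep; last first.
  by move=> [[[i j]|i]|[]] _ /=; [exists (B (inl (i, j))) | exists (b i) | exists C
    | exists (B (inr tt))].
rewrite (eq_bigl predT) => [|k]; last by rewrite finset.in_setT.
rewrite /box_prob !big_sumType big_bool (big_pred1 tt) => [|[]//] /=.
rewrite (eq_bigr (fun p => mu (B (inl p)))) => [|[i j] _]; last exact: lawZt.
by rewrite lawZp // [(P (xi @^-1` C) * _)%E]muleC muleACA.
Qed.

Definition relabel (s : zidx -> zidx) (f : 'I_n -> bool) (y : sample_space) :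
  sample_space := (y.1.1 \o s, fun i => f i (+) y.1.2 i, y.2).

Section relabel.
Variables (s : zidx -> zidx) (f : 'I_n -> bool).
Hypothesis sK : involutive s.

Lemma preimage_relabel_box B b C :
  relabel s f @^-1` box B b C = box (B \o s) (fun i => addb (f i) @^-1` b i) C.
Proof.
by apply/seteqP; split => y [hB hbC]; split => // c; have := hB (s c); rewrite /= sK.
Qed.

Lemma box_prob_relabel B b C :
  box_prob (B \o s) (fun i => addb (f i) @^-1` b i) C = box_prob B b C.
Proof.
rewrite /box_prob [in RHS](reindex_inj (inv_inj sK)); congr (_ * (_ * _))%E.
by apply: eq_bigr => i _; exact: prob_preimage_addb.
Qed.

Lemma measurable_relabel : measurable_fun setT (relabel s f).
Proof.
apply: (@measurability _ _ _ _ setT (relabel s f) boxes) => //.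
move=> _ [_ [B [b [C [mB mC ->]]]] <-].
by rewrite setTI preimage_relabel_box; apply: measurable_box => // c; exact: mB.
Qed.

Lemma law_relabel_sample S : measurable S ->
  P (sample @^-1` S) = P ((relabel s f \o sample) @^-1` S).
Proof.
apply: (@eq_law_generated _ _ _ P _ _ sample _ boxes) => //.
- exact: measurable_sample.
- exact: measurableT_comp measurable_relabel measurable_sample.
- exact: boxes_setI.
- exact: boxes_setT.
move=> _ [B [b [C [mB mC ->]]]].
rewrite comp_preimage preimage_relabel_box !prob_sample_box //.
- by rewrite box_prob_relabel.
- by move=> c; exact: mB.
Qed.

Lemma Ex_relabel (phi : sample_space -> R) :
  measurable_fun setT phi -> (forall y, 0 <= phi y) ->
  Ex P (fun w => phi (sample w)) = Ex P (fun w => phi (relabel s f (sample w))).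
Proof.
move=> mphi phi_ge0.
apply: (@Ex_eq_law _ _ _ P _ _ sample (relabel s f \o sample)) => //.
- exact: measurable_sample.
- exact: measurableT_comp measurable_relabel measurable_sample.
- exact: law_relabel_sample.
Qed.

End relabel.

Context {dW : measure_display} {W : measurableType dW}
  {A : n.-tuple Z -> Xi -> W} {loss : W -> Z -> R}.
Hypothesis mloss : measurable_fun setT (fun p : W * Z => loss p.1 p.2).
Hypothesis mA : measurable_fun setT (fun p : n.-tuple Z * Xi => A p.1 p.2).
Hypothesis loss01 : forall h z, loss h z = 0 \/ loss h z = 1.

Definition train_of (y : sample_space) : n.-tuple Z :=
  [tuple y.1.1 (inl (i, y.1.2 i)) | i < n].

Definition hyp_of (y : sample_space) : W := A (train_of y) y.2.

Definition loss_on (i : 'I_n) (b : bool) (c : zidx) (y : sample_space) : R :=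
  if y.1.2 i == b then loss (hyp_of y) (y.1.1 c) else 0.

Lemma hyp_of_sample w : hyp_of (sample w) = hyp A Zt U xi w.
Proof. by []. Qed.

Lemma measurable_train_of : measurable_fun setT train_of.
Proof.
apply/measurable_fun_tnthP => i.
rewrite (_ : _ \o _ = fun y : sample_space =>
  if y.1.2 i then y.1.1 (inl (i, true)) else y.1.1 (inl (i, false))).
  by apply: measurable_fun_ifT; [exact: measurable_ucoord | exact: measurable_zcoord ..].
by apply/funext => y /=; rewrite tnth_mktuple; case: (y.1.2 i).
Qed.

Lemma measurable_hyp_of : measurable_fun setT hyp_of.
Proof.
exact: measurableT_comp mA (measurable_fun_pair measurable_train_of measurable_xicoord).
Qed.

Lemma measurable_loss_on i b c : measurable_fun setT (loss_on i b c).
Proof.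
apply: measurable_fun_ifT.
- by apply: (measurableT_comp (f := fun u : bool => u == b)) => //; exact: measurable_ucoord.
- exact: measurableT_comp mloss (measurable_fun_pair measurable_hyp_of (measurable_zcoord c)).
- exact: measurable_cst.
Qed.

Lemma loss_on01 i b c y : 0 <= loss_on i b c y <= 1.
Proof.
rewrite /loss_on; case: eqP => _; last by rewrite lexx ler01.
by case: (loss01 (hyp_of y) (y.1.1 c)) => ->; rewrite ?lexx ?ler01.
Qed.

Lemma bounded_measurable_loss_on i b c :
  bounded_measurable (fun w => loss_on i b c (sample w)).
Proof.
split; first exact: measurableT_comp (measurable_loss_on _ _ _) measurable_sample.
by exists 1 => w; have /andP[? ?] := loss_on01 i b c (sample w); rewrite ger0_norm.
Qed.

Lemma hyp_of_relabel s f y :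
  (forall i, s (inl (i, f i (+) y.1.2 i)) = inl (i, y.1.2 i)) ->
  hyp_of (relabel s f y) = hyp_of y.
Proof.
move=> s_train; rewrite /hyp_of; congr A; apply: eq_from_tnth => i.
by rewrite !tnth_mktuple /= s_train.
Qed.

Lemma Ex_loss_on_swap_pair i b c :
  Ex P (fun w => loss_on i b c (sample w))
  = Ex P (fun w => loss_on i (~~ b) (tperm (inl (i, false)) (inl (i, true)) c) (sample w)).
Proof.
set s := tperm _ _; have sK : involutive s := tpermK _ _.
rewrite [RHS](Ex_relabel s (fun k => k == i) sK);
  [| exact: measurable_loss_on | by move=> y; case/andP: (loss_on01 i (~~ b) (s c) y)].
apply: eq_Ex => w; rewrite /loss_on /= sK hyp_of_relabel.
  by rewrite eqxx /=; case: b; case: (U i w).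
move=> k /=; case: (eqVneq k i) => [->|k_neq_i] /=.
  by case: (U i w); rewrite ?tpermL ?tpermR.
by rewrite tpermD //; apply/eqP => -[ik]; rewrite ik eqxx in k_neq_i.
Qed.

Lemma Ex_loss_on_swap_test i c :
  Ex P (fun w => loss_on i true c (sample w))
  = Ex P (fun w => loss_on i true (tperm (inl (i, false)) (inr tt) c) (sample w)).
Proof.
set s := tperm _ _; have sK : involutive s := tpermK _ _.
rewrite [RHS](Ex_relabel s (fun=> false) sK);
  [| exact: measurable_loss_on | by move=> y; case/andP: (loss_on01 i true (s c) y)].
apply: eq_Ex => w; rewrite /loss_on /= sK.
case Ui: (U i w) => //=; rewrite hyp_of_relabel // => k /=.
by rewrite tpermD //; apply/eqP => -[<- Uk]; rewrite Ui in Uk.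
Qed.

Definition Lplus_on (i : 'I_n) (b : bool) : R :=
  Ex P (fun w => loss_on i b (inl (i, false)) (sample w)).

Lemma L_muE i : L_mu P A loss Zt U xi Zp = 2 * Lplus_on i true.
Proof.
have -> : L_mu P A loss Zt U xi Zp
          = Ex P (fun w => loss_on i true (inr tt) (sample w)
                           + loss_on i false (inr tt) (sample w)).
  by apply: eq_Ex => w; rewrite /loss_on /=; case: (U i w); rewrite ?addr0 ?add0r.
rewrite ExD; [| exact: bounded_measurable_loss_on ..].
rewrite (Ex_loss_on_swap_pair i false) tpermD // Ex_loss_on_swap_test tpermR.
by rewrite -mulr2n mulr_natl.
Qed.

Lemma train_lossE i w : loss (hyp A Zt U xi w) (tnth (train Zt U w) i)
  = loss_on i true (inl (i, true)) (sample w) + loss_on i false (inl (i, false)) (sample w).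
Proof. by rewrite tnth_mktuple /loss_on /=; case: (U i w); rewrite ?addr0 ?add0r. Qed.

Lemma bounded_measurable_train_loss i :
  bounded_measurable (fun w => loss (hyp A Zt U xi w) (tnth (train Zt U w) i)).
Proof.
under eq_fun do rewrite train_lossE.
by apply: bounded_measurableD; exact: bounded_measurable_loss_on.
Qed.

Lemma Ex_train_loss i :
  Ex P (fun w => loss (hyp A Zt U xi w) (tnth (train Zt U w) i)) = 2 * Lplus_on i false.
Proof.
under eq_fun do rewrite train_lossE.
rewrite ExD; [| exact: bounded_measurable_loss_on ..].
by rewrite (Ex_loss_on_swap_pair i true) tpermR -mulr2n mulr_natl.
Qed.

Lemma bounded_measurable_emp_risk :
  bounded_measurable (fun w => emp_risk loss (hyp A Zt U xi w) (train Zt U w)).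
Proof.
apply: bounded_measurableM; first exact: bounded_measurable_cst.
by apply: bounded_measurable_sum => i; exact: bounded_measurable_train_loss.
Qed.

Lemma L_nE : L_n P A loss Zt U xi = n%:R^-1 * (2 * \sum_(i < n) Lplus_on i false).
Proof.
rewrite /L_n /emp_risk ExZ; last first.
  by apply: bounded_measurable_sum => i; exact: bounded_measurable_train_loss.
rewrite Ex_sum; last exact: bounded_measurable_train_loss.
by rewrite [in RHS]mulr_sumr; congr (_ * _); apply: eq_bigr => i _; exact: Ex_train_loss.
Qed.

Lemma Vgamma_ge gamma : (0 < n)%N -> gamma ^+ 2 <= 1 ->
  gamma ^+ 2 * L_n P A loss Zt U xi <= Vgamma P A loss Zt U xi gamma.
Proof.
move=> n_gt0 gamma_le1; rewrite /L_n -ExZ; last exact: bounded_measurable_emp_risk.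
apply: ler_Ex.
- apply: bounded_measurableM; [exact: bounded_measurable_cst | exact: bounded_measurable_emp_risk].
- apply: bounded_measurableM; first exact: bounded_measurable_cst.
  apply: bounded_measurable_sum => i; under eq_fun do rewrite expr2.
  apply: bounded_measurableM; apply: bounded_measurableB; by [
    exact: bounded_measurable_train_loss |
    apply: bounded_measurableM; [exact: bounded_measurable_cst | exact: bounded_measurable_emp_risk]].
- move=> w; apply: gamma_variance01_ge => // i; exact: loss01.
Qed.

Lemma Ex_eps_Lplus C1 gamma i :
  Ex P (fun w => eps_shift U C1 gamma i w * Lplus A loss Zt U xi i w)
  = (1 - C1 * gamma ^+ 2 / (C1 * gamma ^+ 2 + 2)) * Lplus_on i true
    - (1 + C1 * gamma ^+ 2 / (C1 * gamma ^+ 2 + 2)) * Lplus_on i false.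
Proof.
set c := C1 * gamma ^+ 2 / _.
have -> : Ex P (fun w => eps_shift U C1 gamma i w * Lplus A loss Zt U xi i w)
          = Ex P (fun w => (1 - c) * loss_on i true (inl (i, false)) (sample w)
                           - (1 + c) * loss_on i false (inl (i, false)) (sample w)).
  apply: eq_Ex => w; rewrite /eps_shift /Lplus /loss_on -/c /= hyp_of_sample.
  by case: (U i w) => /=; ring.
have bl b := bounded_measurable_loss_on i b (inl (i, false)).
rewrite ExB ?ExZ //; apply: bounded_measurableM => //; exact: bounded_measurable_cst.
Qed.

End supersample_space.

Theorem lemma4 (R : realType) (dO dZ dW dX : measure_display)
  (Omega : measurableType dO) (Z : measurableType dZ)
  (W : measurableType dW) (Xi : measurableType dX)
  (P : probability Omega R) (n : nat) (mu : probability Z R)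
  (A : n.-tuple Z -> Xi -> W) (loss : W -> Z -> R)
  (Zt : 'I_n -> bool -> Omega -> Z) (U : 'I_n -> Omega -> bool)
  (xi : Omega -> Xi) (Zp : Omega -> Z)
  (gamma C1 : R) :
  (0 < n)%N ->
  (* loss with values in {0,1}, jointly measurable *)
  (forall h z, loss h z = 0 \/ loss h z = 1) ->
  measurable_fun setT (fun p : W * Z => loss p.1 p.2) ->
  (* (randomized) learning algorithm: measurable map of sample and randomness *)
  measurable_fun setT (fun p : n.-tuple Z * Xi => A p.1 p.2) ->
  (* random elements *)
  (forall i j, measurable_fun setT (Zt i j)) ->
  (forall i, measurable_fun setT (U i)) ->
  measurable_fun setT xi -> measurable_fun setT Zp ->
  (* laws: Ztilde_{i,j} ~ mu, Z' ~ mu, U_i uniform on {0,1} *)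
  (forall i j B, measurable B -> P (Zt i j @^-1` B) = mu B) ->
  (forall B, measurable B -> P (Zp @^-1` B) = mu B) ->
  (forall i b, P (U i @^-1` [set b]) = (2^-1)%:E) ->
  (* all of them mutually independent *)
  mutually_independent P (ss_sigma Zt U xi Zp) ->
  0 < gamma < 1 -> 0 < C1 ->
  Err P A loss Zt U xi Zp - C1 * Vgamma P A loss Zt U xi gamma
  <= (2 + C1 * gamma ^+ 2) / n%:R
     * \sum_(i < n) Ex P (fun w => eps_shift U C1 gamma i w * Lplus A loss Zt U xi i w).
Proof.
move=> n_gt0 loss01 mloss mA mZt mU mxi mZp lawZt lawZp lawU indep.
move=> /andP[gamma_gt0 gamma_lt1] C1_gt0.
have fairU i : P (U i @^-1` [set true]) = P (U i @^-1` [set false]) by rewrite !lawU.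
under eq_bigr => i _ do rewrite (Ex_eps_Lplus (Zp := Zp)) //.
rewrite /Err; apply: shifted_rademacher_bound => //.
- exact: ltW.
- by move=> i; exact: (L_muE (mu := mu)).
- exact: (L_nE (mu := mu)).
- by apply: (Vgamma_ge (Zp := Zp)) => //; rewrite expr_le1 ?ltW.
Qed.
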